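(* Let $q$ be a prime power and let $\Im$ be an $\{f,m;k-1,q\}$-minihyper in $PG(k-1,q)$ of rank $k'<k$. Let $S$ be the $(k'-1)$-dimensional projective subspace of $PG(k-1,q)$ spanned by the points of positive multiplicity of $\Im$, identified with $PG(k'-1,q)$, and let $\Im'$ be the restriction of $\Im$ to $S$, assumed to be an $\{f,m;k'-1,q\}$-minihyper in $S$ with $\mathrm{Rank}(\Im')=k'$. Then $$\mathfrak{e}(\Im)=q^{k-k'}\,\mathfrak{e}(\Im').$$
   Context: A multiset $\Im$ in $PG(k-1,q)$ is a map from the set of points of $PG(k-1,q)$ to the non-negative integers; for a set $Q$ of points, $\Im(Q)=\sum_{\mathbf{p}\in Q}\Im(\mathbf{p})$. $\Im$ is an $\{f,m;k-1,q\}$-minihyper if $\Im(PG(k-1,q))=f$, $\Im(H)\ge m$ for every hyperplane $H$, and $\Im(H_0)=m$ for some hyperplane $H_0$. The rank of $\Im$ is the rank of the $k\times f$ matrix whose columns are (fixed vector representatives of) the points of $\Im$, each repeated according to its multiplicity. $\mathfrak{e}(\Im)$ is the number of hyperplanes $H$ of the ambient projective space with $\Im(H)=m$ (for $\Im'$, the hyperplanes of $S$). *)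

(* Projective geometry PG(k-1,q) over a finite field F with #|F| = q,
   subspaces of F^k represented canonically by square matrices A with <<A>>%MS = A. *)
From mathcomp Require Import all_boot all_order all_algebra all_fingroup all_field.
Set Implicit Arguments. Unset Strict Implicit. Unset Printing Implicit Defensive.
Import GRing.Theory.
Local Open Scope ring_scope.

Section PG.
Variables (F : finFieldType) (k : nat).
Local Notation M := 'M[F]_k.

Definition canon (A : M) : bool := (<<A>>%MS == A).

Definition is_point (A : M) : bool := canon A && (\rank A == 1)%N.

Definition is_hyperplane_of (U H : M) : bool :=
  [&& canon H, (H <= U)%MS & \rank H == (\rank U).-1]%N.

Definition mass (Im : M -> nat) (Q : M) : nat :=
  (\sum_(A : M | is_point A && (A <= Q)%MS) Im A)%N.

Definition minihyper_in (U : M) (Im : M -> nat) (f m : nat) : Prop :=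
  [/\ mass Im U = f,
      (forall H, is_hyperplane_of U H -> m <= mass Im H)%N &
      exists H0, is_hyperplane_of U H0 /\ mass Im H0 = m].

Definition support_span (Im : M -> nat) : M :=
  <<(\sum_(A : M | is_point A && (0 < Im A)%N) A)%MS>>%MS.

(* rank of the k x f matrix of the points (with multiplicity) = dim of their span *)
Definition mrank (Im : M -> nat) : nat := \rank (support_span Im).

Definition restr (U : M) (Im : M -> nat) : M -> nat :=
  fun A => if (A <= U)%MS then Im A else 0%N.

Definition e_in (U : M) (Im : M -> nat) (m : nat) : nat :=
  #|[set H : M | is_hyperplane_of U H & mass Im H == m]|.

End PG.

(* Every point of positive multiplicity lies in the span [S] of the support,
   so [Im(H) = Im(H :&: S)] for every hyperplane [H].  As [S] is spanned by
   such points, no hyperplane of [S] carries the whole mass, so [m < f]; hence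
   a hyperplane [H] of mass [m] does not contain [S] and meets it in a
   hyperplane of [S] of mass [m].  Conversely, the hyperplanes [H] with
   [H :&: S = H'] for a fixed hyperplane [H'] of [S] are obtained by choosing,
   independently for each of the [k - k'] basis vectors [b] of a complement
   of [S], which vector [b + c s0] ([c] in [F], [s0] in [S] outside [H'])
   lies in [H]: there are [q ^ (k - k')] of them. *)

From mathcomp Require Import all_boot all_order all_algebra all_fingroup all_field.
From mathcomp Require Import zify.
Set Implicit Arguments. Unset Strict Implicit. Unset Printing Implicit Defensive.
Import GRing.Theory.
Local Open Scope ring_scope.

Section Subspaces.
Variables (F : finFieldType) (k : nat).
Local Notation M := 'M[F]_k.

Lemma canon_eq (A B : M) : canon A -> canon B -> (A == B)%MS -> A = B.
Proof. by rewrite /canon => /eqP cA /eqP cB /genmxP; rewrite cA cB. Qed.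

Lemma canon_genmx n (A : 'M[F]_(n, k)) : canon <<A>>%MS.
Proof. by rewrite /canon genmx_id. Qed.

Lemma canon_capmx (A B : M) : canon A -> canon B -> canon (A :&: B)%MS.
Proof. by rewrite /canon => /eqP cA /eqP cB; rewrite genmx_cap cA cB. Qed.

Lemma rank_ltmxW n1 n2 (A : 'M[F]_(n1, k)) (B : 'M[F]_(n2, k)) :
  (A <= B)%MS -> ~~ (B <= A)%MS -> (\rank A < \rank B)%N.
Proof. by move=> sAB nsBA; apply: rank_ltmx; rewrite ltmxE sAB. Qed.

Lemma is_hyperplane_of1 (H : M) :
  is_hyperplane_of 1%:M H = canon H && (\rank H == k.-1)%N.
Proof. by rewrite /is_hyperplane_of submx1 mxrank1. Qed.

Lemma hyperplane_addsmx_full n (H : M) (A : 'M[F]_(n, k)) :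
  is_hyperplane_of 1%:M H -> ~~ (A <= H)%MS -> row_full (H + A)%MS.
Proof.
rewrite is_hyperplane_of1 => /andP[_ /eqP rH] nsAH.
have := rank_ltmxW (addsmxSl H A) (contra (submx_trans (addsmxSr H A)) nsAH).
have := rank_leq_col (H + A)%MS; rewrite /row_full rH; lia.
Qed.

Lemma hyperplane_capmx (S H : M) :
  canon S -> is_hyperplane_of 1%:M H -> ~~ (S <= H)%MS ->
  is_hyperplane_of S (H :&: S)%MS.
Proof.
move=> cS hypH nsSH; have /eqP fullHS := hyperplane_addsmx_full hypH nsSH.
case/and3P: hypH => cH _ /eqP; rewrite mxrank1 => rH.
rewrite /is_hyperplane_of canon_capmx // capmxSr /=.
have := rank_leq_col S; have := mxrank_sum_cap H S; rewrite fullHS rH; lia.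
Qed.

Lemma col_mul_sub_eq0 n (phi : 'cV[F]_n) (v : 'rV[F]_k) (H : M) :
  (phi *m v <= H)%MS -> ~~ (v <= H)%MS -> phi = 0.
Proof.
move=> sphivH nsvH; apply/eqP/negPn/negP => nz_phi.
have /row_fullP[w /(congr1 (mulmx^~ v))] : row_full phi.
  by rewrite /row_full eqn_leq rank_leq_col lt0n mxrank_eq0.
rewrite mul1mx -mulmxA => ev.
by move: nsvH; rewrite -ev (submx_trans (submxMl _ _) sphivH).
Qed.

Section Extensions.
Variables (S H' : M) (s0 : 'rV[F]_k).
Hypotheses (cS : canon S) (cH' : canon H') (sH'S : (H' <= S)%MS) (rH' : \rank H' = (\rank S).-1)
  (s0S : (s0 <= S)%MS) (s0H' : ~~ (s0 <= H')%MS).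

Let B := row_base (S^C)%MS.

Definition extension (phi : 'cV[F]_(\rank (S^C)%MS)) : M :=
  <<(H' + (B + phi *m s0)%R)%MS>>%MS.

Lemma rank_space_gt0 : (0 < \rank S)%N.
Proof.
have := rank_ltmxW sH'S (contra (submx_trans s0S) s0H'); lia.
Qed.

Lemma sub_addsmx_point : (S <= H' + s0)%MS.
Proof.
rewrite -(geq_leqif (mxrank_leqif_sup _)); last by rewrite addsmx_sub sH'S.
have := rank_ltmxW (addsmxSl H' s0) (contra (submx_trans (addsmxSr H' s0)) s0H').
rewrite rH'; lia.
Qed.

Lemma extension_sub phi : (H' <= extension phi)%MS.
Proof. by rewrite genmxE addsmxSl. Qed.

Lemma extension_sub_shift phi : ((B + phi *m s0)%R <= extension phi)%MS.
Proof. by rewrite genmxE addsmxSr. Qed.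

Lemma extension_full phi : row_full (extension phi + s0)%MS.
Proof.
rewrite -sub1mx; apply: submx_trans (submx_full _ (addsmx_compl_full S)) _.
rewrite addsmx_sub; apply/andP; split.
  by apply: submx_trans sub_addsmx_point _; apply: addsmxS; first exact: extension_sub.
have sSCB : ((S^C)%MS <= B)%MS by rewrite eq_row_base.
apply: submx_trans sSCB _.
rewrite -/B -[B](addrK (phi *m s0)) -mulNmx.
exact: addmx_sub_adds (extension_sub_shift phi) (submxMl _ _).
Qed.

Lemma rank_extension phi : \rank (extension phi) = k.-1.
Proof.
apply/eqP; rewrite eqn_leq; apply/andP; split.
  rewrite mxrank_gen; apply: leq_trans (mxrank_adds_leqif _ _) _.
  have := rank_leq_row (B + phi *m s0)%R; have := mxrank_compl S.
  have := rank_leq_col S; have := rank_space_gt0; rewrite rH'; lia.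
have /eqP := extension_full phi; case: (mxrank_adds_leqif (extension phi) s0) => + _.
have := rank_leq_row s0; lia.
Qed.

Lemma extension_hyperplane phi : is_hyperplane_of 1%:M (extension phi).
Proof. by rewrite is_hyperplane_of1 canon_genmx rank_extension /=. Qed.

Lemma point_notin_extension phi : ~~ (s0 <= extension phi)%MS.
Proof.
apply/negP => s0ext; have /eqP := extension_full phi.
rewrite (eqmx_rank (_ : (extension phi + s0 == extension phi)%MS)) ?rank_extension.
  have := rank_leq_col S; have := rank_space_gt0; lia.
by rewrite addsmx_sub submx_refl s0ext addsmxSl.
Qed.

Lemma capmx_extension phi : (extension phi :&: S)%MS = H'.
Proof.
have sH'cap : (H' <= extension phi :&: S)%MS by rewrite sub_capmx extension_sub.
apply: canon_eq cH' _; first by rewrite canon_capmx ?canon_genmx.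
rewrite sH'cap andbT -(geq_leqif (mxrank_leqif_sup sH'cap)).
suff : (\rank (extension phi :&: S) < \rank S)%N by rewrite rH'; lia.
apply: rank_ltmxW; first exact: capmxSr.
apply: contra (point_notin_extension phi) => sScap.
by apply: submx_trans s0S (submx_trans sScap (capmxSl _ _)).
Qed.

Lemma extension_inj : injective extension.
Proof.
move=> phi psi eq_ext; apply/eqP; rewrite -subr_eq0; apply/eqP.
apply: col_mul_sub_eq0 s0H'; rewrite -(capmx_extension phi) sub_capmx.
rewrite (submx_trans (submxMl _ _) s0S) andbT.
have -> : (phi - psi) *m s0 = (B + phi *m s0)%R - (B + psi *m s0).
  by rewrite mulmxBl opprD addrACA subrr add0r.
rewrite addmx_sub ?extension_sub_shift // eqmx_opp eq_ext.
exact: extension_sub_shift.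
Qed.

Lemma extensionP (H : M) :
  is_hyperplane_of 1%:M H -> (H :&: S)%MS = H' -> exists phi, H = extension phi.
Proof.
move=> hypH capH.
have s0H : ~~ (s0 <= H)%MS by apply: contra s0H' => s0H; rewrite -capH sub_capmx s0H.
have /sub_addsmxP[u eu] := submx_full B (hyperplane_addsmx_full hypH s0H).
exists (- u.2); have sextH : (extension (- u.2) <= H)%MS.
  rewrite genmxE addsmx_sub -capH capmxSl /=.
  by rewrite eu mulNmx addrK submxMl.
case/andP: hypH => cH /andP[_ /eqP rH]; apply: canon_eq; rewrite ?canon_genmx //.
by rewrite sextH andbT -(geq_leqif (mxrank_leqif_sup sextH)) rank_extension rH mxrank1.
Qed.

Lemma card_extensions :
  #|[set H : M | is_hyperplane_of 1%:M H & (H :&: S)%MS == H']| = (#|F| ^ (k - \rank S))%N.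
Proof.
have -> : [set H : M | is_hyperplane_of 1%:M H & (H :&: S)%MS == H'] = extension @: setT.
  apply/setP => H; rewrite inE; apply/andP/imsetP => [[hypH /eqP capH] | [phi _ ->]].
    by have [phi ->] := extensionP hypH capH; exists phi.
  by rewrite extension_hyperplane capmx_extension.
by rewrite card_imset ?cardsT ?card_mx ?mxrank_compl ?muln1 //; exact: extension_inj.
Qed.

End Extensions.

Lemma card_hyperplanes_above (S H' : M) :
  canon S -> (0 < \rank S)%N -> is_hyperplane_of S H' ->
  #|[set H : M | is_hyperplane_of 1%:M H & (H :&: S)%MS == H']| = (#|F| ^ (k - \rank S))%N.
Proof.
move=> cS rS /and3P[cH' sH'S /eqP rH'].
have /row_subPn[i s0H'] : ~~ (S <= H')%MS by apply/negP => /mxrankS; rewrite rH'; lia.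
exact: card_extensions (row_sub i S) s0H'.
Qed.

Section Mass.
Variable Im : M -> nat.
Local Notation S := (support_span Im).

Lemma eq_mass (P Q : M) : (P :=: Q)%MS -> mass Im P = mass Im Q.
Proof. by move=> eqPQ; apply: eq_bigl => A; rewrite eqPQ. Qed.

Lemma support_span_subP (Q : M) :
  reflect (forall A, is_point A -> (0 < Im A)%N -> (A <= Q)%MS) (S <= Q)%MS.
Proof.
rewrite genmxE; apply: (iffP sumsmx_subP) => sQ A; first by move=> pA IA; rewrite sQ ?pA.
by case/andP; exact: sQ.
Qed.

Lemma point_sub_support_span A : is_point A -> (0 < Im A)%N -> (A <= S)%MS.
Proof. by move/support_span_subP: (submx_refl S); apply. Qed.

Lemma mass_restr_support (Q : M) : mass (restr S Im) Q = mass Im Q.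
Proof.
apply: eq_bigr => A /andP[pA _]; rewrite /restr; case: ifPn => // nsAS.
by case: (posnP (Im A)) => // IA; case/negP: nsAS; exact: point_sub_support_span.
Qed.

Lemma mass_capmx_support (Q : M) : mass Im (Q :&: S)%MS = mass Im Q.
Proof.
rewrite /mass [LHS]big_mkcond [RHS]big_mkcond; apply: eq_bigr => A _.
rewrite sub_capmx; case: (posnP (Im A)) => [-> | IA]; first by rewrite !if_same.
by case pA: (is_point A) => //=; rewrite point_sub_support_span ?andbT.
Qed.

Lemma mass_ltn (P Q A : M) : (Q <= P)%MS -> is_point A -> (0 < Im A)%N ->
  (A <= P)%MS -> ~~ (A <= Q)%MS -> (mass Im Q < mass Im P)%N.
Proof.
move=> sQP pA IA sAP nsAQ; rewrite [X in (_ < X)%N](bigID (fun B => B <= Q)%MS) /=.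
have -> : (\sum_(B | is_point B && (B <= P)%MS && (B <= Q)%MS) Im B = mass Im Q)%N.
  apply: eq_bigl => B; case: (boolP (B <= Q)%MS) => [sBQ | _]; rewrite ?andbF //.
  by rewrite (submx_trans sBQ sQP) !andbT.
by rewrite (bigD1 A) /=; [lia | rewrite pA sAP nsAQ].
Qed.

Lemma mass_lt_support (Q : M) :
  (Q <= S)%MS -> ~~ (S <= Q)%MS -> (mass Im Q < mass Im S)%N.
Proof.
move=> sQS nsSQ.
case: (pickP [pred A | [&& is_point A, 0 < Im A & ~~ (A <= Q)%MS]%N]) => [A | noA].
  case/and3P=> pA IA nsAQ.
  exact: mass_ltn sQS pA IA (point_sub_support_span pA IA) nsAQ.
case/negP: nsSQ; apply/support_span_subP => A pA IA.
by move: (noA A) => /=; rewrite pA IA => /negbFE.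
Qed.

Lemma hyperplane_capmx_support (H : M) :
  is_hyperplane_of 1%:M H -> mass Im H != mass Im S -> is_hyperplane_of S (H :&: S)%MS.
Proof.
move=> hypH massH; apply: hyperplane_capmx (canon_genmx _) hypH _.
by apply: contra massH => sSH; rewrite -mass_capmx_support (eq_mass (capmx_idPr sSH)).
Qed.

Lemma e_in_restr_support (U : M) m : e_in U (restr S Im) m = e_in U Im m.
Proof. by apply: eq_card => H; rewrite !inE mass_restr_support. Qed.

Lemma e_in_partition m : mass Im S != m ->
  e_in 1%:M Im m = (\sum_(H' in [set H' | is_hyperplane_of S H' & mass Im H' == m])
                     #|[set H | is_hyperplane_of 1%:M H & (H :&: S)%MS == H']|)%N.
Proof.
move=> massSm; rewrite /e_in -[LHS]sum1_card.
rewrite (partition_big (fun H => H :&: S)%MS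
  (mem [set H' | is_hyperplane_of S H' & mass Im H' == m])) /=.
  apply: eq_bigr => H' /[!inE] /andP[_ /eqP massH']; rewrite -sum1_card.
  apply: eq_bigl => H; rewrite !inE; case: ((H :&: S)%MS =P H') => [capH | _].
    by rewrite -mass_capmx_support capH massH' eqxx !andbT.
  by rewrite !andbF.
move=> H /[!inE] /andP[hypH /eqP massH].
by rewrite hyperplane_capmx_support ?mass_capmx_support ?massH ?eqxx // eq_sym.
Qed.

End Mass.

End Subspaces.

Theorem lemma6 (F : finFieldType) (k k' f m : nat) (Im : 'M[F]_k -> nat) :
  (0 < k')%N -> (k' < k)%N ->
  minihyper_in 1%:M Im f m ->
  mrank Im = k' ->
  minihyper_in (support_span Im) (restr (support_span Im) Im) f m ->
  mrank (restr (support_span Im) Im) = k' ->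
  e_in 1%:M Im m = (#|F| ^ (k - k') * e_in (support_span Im) (restr (support_span Im) Im) m)%N.
Proof.
move=> k'_gt0 _ _ rS [massS _ [H0 [hypH0 massH0]]] _.
rewrite mass_restr_support in massS; rewrite mass_restr_support in massH0.
have {}rS : \rank (support_span Im) = k' := rS.
have m_lt_f : (m < f)%N.
  case/and3P: hypH0 => _ sH0S /eqP rH0; rewrite -massS -massH0 mass_lt_support //.
  by apply/negP => /mxrankS; rewrite rH0 rS; lia.
rewrite e_in_restr_support e_in_partition ?massS ?gtn_eqF //.
rewrite (eq_bigr (fun _ => #|F| ^ (k - k'))%N) => [|H' /[!inE] /andP[hypH' _]].
  by rewrite sum_nat_const mulnC.
by rewrite -rS card_hyperplanes_above ?canon_genmx ?rS.
Qed.
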